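(* Let $k$ be an algebraically closed field of characteristic zero. Let $A$ be an integral normal $k$-algebra of finite type endowed with a locally nilpotent $k$-derivation $\partial$, let $F_n=\ker\partial^{n+1}$ ($n\geq0$), $F_{-1}=\{0\}$, and let $R(A,\partial)=\bigoplus_{n\geq0}F_n$ be its Rees algebra. The following are equivalent: (1) $R(A,\partial)$ is finitely generated over $k$; (2) the associated graded algebra $\mathrm{gr}_\partial A=\bigoplus_{n\geq0}F_n/F_{n-1}$ is finitely generated over $k$; (3) the $k$-algebra $A_0=F_0=\ker\partial$ is finitely generated and $R(A,\partial)_+=\bigoplus_{n>0}F_n$ is a finitely generated $R(A,\partial)$-module.
   Context: $R(A,\partial)$ and $\mathrm{gr}_\partial A$ carry the multiplication induced by that of $A$ (note $F_mF_n\subseteq F_{m+n}$). Equivalently $R(A,\partial)$ is the graded subalgebra $\bigoplus_n F_n\upsilon^n$ of $A[\upsilon]$. *)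

From HB Require Import structures.
From mathcomp Require Import all_boot all_order all_algebra.
From mathcomp Require Import fraction.
Set Implicit Arguments. Unset Strict Implicit. Unset Printing Implicit Defensive.
Import GRing.Theory.
Local Open Scope ring_scope.

(* A commutative k-algebra is an idomain A together with a structure ring
   morphism iota : k -> A.  Subalgebras are predicates (B -> Prop). *)

Section Defs.
Variable k : fieldType.

Definition ksubalg_closed (B : nzRingType) (j : k -> B) (T : B -> Prop) :=
  [/\ forall c, T (j c),
      forall x y, T x -> T y -> T (x + y) &
      forall x y, T x -> T y -> T (x * y)].

Definition in_gen_subalg (B : nzRingType) (j : k -> B) (s : seq B) (x : B) :=
  forall T : B -> Prop, ksubalg_closed j T -> (forall y, y \in s -> T y) -> T x.

Definition fg_subalg (B : nzRingType) (j : k -> B) (S : B -> Prop) :=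
  exists s : seq B, (forall y, y \in s -> S y) /\
                    (forall x, S x <-> in_gen_subalg j s x).

Definition finite_type (A : nzRingType) (iota : k -> A) :=
  fg_subalg iota (fun _ => True).

Definition normal_domain (A : idomainType) :=
  forall x : {fraction A}, integralOver (@tofrac A) x -> exists a : A, x = tofrac a.

Definition is_kderivation (A : comNzRingType) (iota : {rmorphism k -> A})
    (D : A -> A) :=
  [/\ forall x y, D (x + y) = D x + D y,
      forall x y, D (x * y) = D x * y + x * D y &
      forall c x, D (iota c * x) = iota c * D x].

Definition locally_nilpotent (A : nzRingType) (D : A -> A) :=
  forall a, exists n, iter n D a = 0.

Definition Filt (A : nzRingType) (D : A -> A) (n : nat) (a : A) :=
  iter n.+1 D a = 0.

Definition Filt_prev (A : nzRingType) (D : A -> A) (n : nat) (a : A) :=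
  if n is m.+1 then Filt D m a else a = 0.

(* Rees algebra R(A,D) = (+)_n F_n v^n, as a subset of A[v] *)
Definition rees (A : nzRingType) (D : A -> A) (p : {poly A}) :=
  forall n, Filt D n p`_n.

Definition rees_plus (A : nzRingType) (D : A -> A) (p : {poly A}) :=
  rees D p /\ p`_0 = 0.

Definition polyj (A : nzRingType) (iota : k -> A) (c : k) : {poly A} :=
  (iota c)%:P.

(* gr_D A = (+)_n F_n/F_(n-1): its elements are represented by elements of
   the Rees algebra, two representatives being equal in gr_D A iff their
   n-th components differ by an element of F_(n-1) for every n; sum and
   product are induced by those of A[v]. *)
Definition gr_equiv (A : nzRingType) (D : A -> A) (p q : {poly A}) :=
  forall n, Filt_prev D n (p - q)`_n.

(* gr_D A is a finitely generated k-algebra: finitely many classes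
   generate it, i.e. every class has a representative which is a
   k-polynomial expression in the chosen representatives. *)
Definition gr_fg (A : nzRingType) (iota : k -> A) (D : A -> A) :=
  exists s : seq {poly A}, (forall y, y \in s -> rees D y) /\
    forall p, rees D p ->
      exists q, in_gen_subalg (polyj iota) s q /\ gr_equiv D p q.

Definition fg_submodule (B : nzRingType) (S M : B -> Prop) :=
  exists (n : nat) (g : 'I_n -> B), (forall i, M (g i)) /\
    forall x, M x -> exists c : 'I_n -> B,
      (forall i, S (c i)) /\ x = \sum_(i < n) c i * g i.

End Defs.

From HB Require Import structures.
From mathcomp Require Import all_boot all_order all_algebra.
From mathcomp Require Import fraction.
From mathcomp Require Import ring.
Set Implicit Arguments. Unset Strict Implicit. Unset Printing Implicit Defensive.
Import GRing.Theory.
Local Open Scope ring_scope.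

(* It gives F_m F_n <= F_(m+n), so R(A,D) is a graded
   subalgebra of A[v] containing v, and the homogeneous components of an element of the
   subalgebra generated by s lie in the subalgebra generated by the components of s.
   (1) -> (2) because gr is a quotient of R.  (2) -> (1): if a v^n agrees with an
   expression q in the generators up to F_(n-1) v^n, then a v^n - q_n v^n = v (a - q_n) v^(n-1)
   with a - q_n in F_(n-1), so induction on n works once v is added to the generators.
   (1) -> (3): the constant terms of the generators generate F_0, and x - x_0 lies in the
   R-span of the positive-degree components of the generators, a property stable under
   sums and products (xy - x_0 y_0 = y (x - x_0) + x_0 (y - y_0)).  (3) -> (1): writing
   a v^n = sum_i c_i g_i, its degree-n part is a sum of products of components of degree
   j < n of the c_i (handled by strong induction on n) with components of the g_i,
   because the g_i have no constant term. *)

Section GeneratedSubalgebra.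
Variables (k : fieldType) (B : nzRingType) (j : k -> B) (s : seq B).

Lemma in_gen_subalg_closed : ksubalg_closed j (in_gen_subalg j s).
Proof.
split=> [c T [Tj _ _] _ | x y Sx Sy T T_cl Ts | x y Sx Sy T T_cl Ts] //.
- by case: (T_cl) => _ TD _; apply: TD; [exact: Sx | exact: Sy].
- by case: (T_cl) => _ _ TM; apply: TM; [exact: Sx | exact: Sy].
Qed.

Lemma mem_in_gen_subalg y : y \in s -> in_gen_subalg j s y.
Proof. by move=> sy T _ Ts; apply: Ts. Qed.

Lemma in_gen_subalg_j c : in_gen_subalg j s (j c).
Proof. by case: in_gen_subalg_closed => Sj _ _; apply: Sj. Qed.

Lemma in_gen_subalgD x y :
  in_gen_subalg j s x -> in_gen_subalg j s y -> in_gen_subalg j s (x + y).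
Proof. by case: in_gen_subalg_closed => _ SD _; apply: SD. Qed.

Lemma in_gen_subalgM x y :
  in_gen_subalg j s x -> in_gen_subalg j s y -> in_gen_subalg j s (x * y).
Proof. by case: in_gen_subalg_closed => _ _ SM; apply: SM. Qed.

Lemma in_gen_subalg_sub (t : seq B) x :
  {subset s <= t} -> in_gen_subalg j s x -> in_gen_subalg j t x.
Proof. by move=> st Sx T T_cl Tt; apply: Sx => // y /st /Tt. Qed.

Hypothesis j0 : j 0 = 0.

Lemma in_gen_subalg0 : in_gen_subalg j s 0.
Proof. by rewrite -j0; apply: in_gen_subalg_j. Qed.

Lemma in_gen_subalg_sum (I : finType) (F : I -> B) :
  (forall i, in_gen_subalg j s (F i)) -> in_gen_subalg j s (\sum_i F i).
Proof.
by move=> SF; apply: big_ind => //; [exact: in_gen_subalg0 | exact: in_gen_subalgD].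
Qed.

End GeneratedSubalgebra.

Lemma in_gen_subalg_rmorph (k : fieldType) (B C : nzRingType) (j : k -> B)
    (j' : k -> C) (f : {rmorphism B -> C}) (s : seq B) (x : B) :
  (forall c, f (j c) = j' c) ->
  in_gen_subalg j s x -> in_gen_subalg j' (map f s) (f x).
Proof.
move=> fj Sx; apply: (Sx (fun y => in_gen_subalg j' (map f s) (f y))).
  split=> [c | y z | y z]; rewrite ?fj ?rmorphD ?rmorphM.
  - exact: in_gen_subalg_j.
  - exact: in_gen_subalgD.
  - exact: in_gen_subalgM.
by move=> y sy; apply: mem_in_gen_subalg; apply: map_f.
Qed.

Section Filtration.
Variables (k : fieldType) (A : comNzRingType) (iota : {rmorphism k -> A}).
Variables (D : A -> A).
Hypothesis derD : is_kderivation iota D.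

Lemma kderD x y : D (x + y) = D x + D y.
Proof. by case: derD. Qed.

Lemma kderM x y : D (x * y) = D x * y + x * D y.
Proof. by case: derD. Qed.

Lemma kder0 : D 0 = 0.
Proof. by apply: (addrI (D 0)); rewrite -kderD !addr0. Qed.

Lemma kder1 : D 1 = 0.
Proof. by apply: (addIr (D 1)); rewrite add0r -{3}[1]mulr1 kderM mulr1 mul1r. Qed.

Lemma kder_iota c : D (iota c) = 0.
Proof. by case: derD => _ _ DZ; rewrite -[iota c]mulr1 DZ kder1 mulr0. Qed.

Lemma iter_kder0 n : iter n D 0 = 0.
Proof. by elim: n => //= n ->; apply: kder0. Qed.

Lemma iter_kderD n x y : iter n D (x + y) = iter n D x + iter n D y.
Proof. by elim: n => //= n ->; apply: kderD. Qed.

Lemma FiltSE n a : Filt D n.+1 a = Filt D n (D a).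
Proof. by rewrite /Filt iterSr. Qed.

Lemma Filt0E a : Filt D 0 a = (D a = 0).
Proof. by []. Qed.

Lemma Filt_kerD n a : D a = 0 -> Filt D n a.
Proof. by move=> Da0; rewrite /Filt iterSr Da0 iter_kder0. Qed.

Lemma Filt0 n : Filt D n 0.
Proof. exact: iter_kder0. Qed.

Lemma FiltD n a b : Filt D n a -> Filt D n b -> Filt D n (a + b).
Proof. by rewrite /Filt iter_kderD => -> ->; rewrite addr0. Qed.

Lemma Filt_sum n (I : finType) (F : I -> A) :
  (forall i, Filt D n (F i)) -> Filt D n (\sum_i F i).
Proof. by move=> FF; apply: big_ind => //; [exact: Filt0 | exact: FiltD]. Qed.

Lemma FiltM m n a b : Filt D m a -> Filt D n b -> Filt D (m + n) (a * b).
Proof.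
elim: m n a b => [|m IHm] n; elim: n => [|n IHn] a b Fa Fb.
- by move: Fa Fb; rewrite !Filt0E kderM => -> ->; rewrite mul0r mulr0 addr0.
- rewrite add0n FiltSE kderM (Fa : D a = 0) mul0r add0r.
  by rewrite FiltSE in Fb; have := IHn a (D b) Fa Fb; rewrite add0n.
- rewrite addn0 FiltSE kderM (Fb : D b = 0) mulr0 addr0.
  by rewrite FiltSE in Fa; have := IHm 0%N (D a) b Fa Fb; rewrite addn0.
- rewrite addSn FiltSE kderM; apply: FiltD; first by apply: IHm; rewrite -?FiltSE.
  by rewrite -addSnnS; apply: IHn; rewrite -?FiltSE.
Qed.

Lemma Filt0_subalg_closed : ksubalg_closed iota (Filt D 0).
Proof.
by split=> [c | a b | a b]; [apply/Filt_kerD/kder_iota | apply: FiltD | apply: FiltM].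
Qed.

End Filtration.

Section HomogeneousComponents.
Variable R : comNzRingType.
Implicit Types (p q : {poly R}) (s : seq {poly R}).

Definition hcomp n p : {poly R} := (p`_n)%:P * 'X^n.

Lemma coef_hcomp n p m : (hcomp n p)`_m = if m == n then p`_n else 0.
Proof. by rewrite coefCM coefXn; case: eqP; rewrite ?mulr1 ?mulr0. Qed.

Lemma hcomp_monomial n a : hcomp n (a%:P * 'X^n) = a%:P * 'X^n.
Proof. by rewrite /hcomp coefCM coefXn eqxx mulr1. Qed.

Lemma hcomp0 n : hcomp n 0 = 0.
Proof. by rewrite /hcomp coef0 mul0r. Qed.

Lemma hcompD n p q : hcomp n (p + q) = hcomp n p + hcomp n q.
Proof. by rewrite /hcomp coefD polyCD mulrDl. Qed.

Lemma hcomp_sum n (I : finType) (F : I -> {poly R}) :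
  hcomp n (\sum_i F i) = \sum_i hcomp n (F i).
Proof. exact: (big_morph _ (hcompD n) (hcomp0 n)). Qed.

Lemma hcompM n p q : hcomp n (p * q) = \sum_(i < n.+1) hcomp i p * hcomp (n - i) q.
Proof.
rewrite /hcomp coefM rmorph_sum mulr_suml; apply: eq_bigr => i _.
by rewrite mulrACA -polyCM -exprD subnKC // -ltnS.
Qed.

Lemma hcomp_eq0 n p : (size p <= n)%N -> hcomp n p = 0.
Proof. by move=> le_p_n; rewrite /hcomp nth_default // mul0r. Qed.

Lemma poly_hcomp p : p = \sum_(i < size p) hcomp i p.
Proof. by rewrite -{1}[p]coefK poly_def; apply: eq_bigr => i _; rewrite /hcomp mul_polyC. Qed.

Definition hcomps m s : seq {poly R} :=
  [seq hcomp i y | y <- s, i <- iota m (size y)].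

Lemma hcomp_in_hcomps m s y i : y \in s -> (m <= i)%N ->
  hcomp i y \in hcomps m s \/ hcomp i y = 0.
Proof.
move=> sy le_m_i; have [lt_i_my | le_my_i] := ltnP i (m + size y).
  by left; apply: allpairs_f_dep sy _; rewrite mem_iota le_m_i.
by right; apply: hcomp_eq0; apply: leq_trans le_my_i; apply: leq_addl.
Qed.

Lemma hcompsP m s z : z \in hcomps m s ->
  exists y i, [/\ y \in s, (m <= i)%N & z = hcomp i y].
Proof.
case/allpairsPdep=> y [i [sy]]; rewrite mem_iota => /andP[le_m_i _] ->.
by exists y, i.
Qed.

End HomogeneousComponents.

Section HomogeneousGenerators.
Variables (k : fieldType) (A : comNzRingType) (iota : {rmorphism k -> A}).
Implicit Types (s : seq {poly A}).

Lemma polyj0 : polyj iota 0 = 0.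
Proof. by rewrite /polyj rmorph0. Qed.

Lemma in_gen_subalg_hcomp s x :
  in_gen_subalg (polyj iota) s x ->
  forall n, in_gen_subalg (polyj iota) (hcomps 0 s) (hcomp n x).
Proof.
move=> Sx.
apply: (Sx (fun x => forall n, in_gen_subalg (polyj iota) (hcomps 0 s) (hcomp n x))).
  split=> [c [|n] | y z Sy Sz n | y z Sy Sz n].
  - by rewrite /hcomp coefC expr0 mulr1; apply: in_gen_subalg_j.
  - by rewrite /hcomp coefC mul0r; apply: in_gen_subalg0 polyj0.
  - by rewrite hcompD; apply: in_gen_subalgD.
  - rewrite hcompM; apply: (in_gen_subalg_sum polyj0) => i.
    exact: in_gen_subalgM.
move=> y sy n; have [|->] := hcomp_in_hcomps sy (leq0n n).
  exact: mem_in_gen_subalg.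
exact: in_gen_subalg0 polyj0.
Qed.

End HomogeneousGenerators.

Section Span.
Variables (B : nzRingType) (S : B -> Prop).
Hypotheses (S0 : S 0) (S1 : S 1).
Hypotheses (SD : forall x y, S x -> S y -> S (x + y)).
Hypotheses (SM : forall x y, S x -> S y -> S (x * y)).
Implicit Types (gl : seq B).

Definition span_in gl x := exists c : 'I_(size gl) -> B,
  (forall i, S (c i)) /\ x = \sum_(i < size gl) c i * gl`_i.

Lemma span_in0 gl : span_in gl 0.
Proof. by exists (fun=> 0); split=> //; rewrite big1 // => i _; rewrite mul0r. Qed.

Lemma span_inD gl x y : span_in gl x -> span_in gl y -> span_in gl (x + y).
Proof.
move=> [c [Sc ->]] [c' [Sc' ->]]; exists (fun i => c i + c' i).
by split=> [i|]; [apply: SD | rewrite -big_split; apply: eq_bigr => i _; rewrite mulrDl].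
Qed.

Lemma span_inM gl r x : S r -> span_in gl x -> span_in gl (r * x).
Proof.
move=> Sr [c [Sc ->]]; exists (fun i => r * c i).
by split=> [i|]; [apply: SM | rewrite mulr_sumr; apply: eq_bigr => i _; rewrite mulrA].
Qed.

Lemma span_in_sum gl (I : finType) (F : I -> B) :
  (forall i, span_in gl (F i)) -> span_in gl (\sum_i F i).
Proof. by move=> SF; apply: big_ind => //; [exact: span_in0 | exact: span_inD]. Qed.

Lemma mem_span_in gl z : z \in gl -> span_in gl z.
Proof.
move=> gl_z; have lt_z_gl : (index z gl < size gl)%N by rewrite index_mem.
pose i0 := Ordinal lt_z_gl.
exists (fun i => if i == i0 then 1 else 0); split=> [i|].
  by case: eqP.
rewrite (bigD1 i0) //= eqxx mul1r nth_index // big1 ?addr0 // => i /negbTE ->.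
by rewrite mul0r.
Qed.

End Span.

Section ReesAlgebra.
Variables (k : fieldType) (A : comNzRingType) (iota : {rmorphism k -> A}).
Variables (D : A -> A).
Hypothesis derD : is_kderivation iota D.
Implicit Types (p q : {poly A}) (s : seq {poly A}).

Local Notation gen s := (in_gen_subalg (polyj iota) s).

Lemma rees0 : rees D 0.
Proof. by move=> n; rewrite coef0; apply: (Filt0 derD). Qed.

Lemma reesD p q : rees D p -> rees D q -> rees D (p + q).
Proof. by move=> Rp Rq n; rewrite coefD; apply: (FiltD derD). Qed.

Lemma reesM p q : rees D p -> rees D q -> rees D (p * q).
Proof.
move=> Rp Rq n; rewrite coefM; apply: (Filt_sum derD) => i.
have le_i_n : (i <= n)%N by rewrite -ltnS.
by rewrite -{1}(subnKC le_i_n); apply: (FiltM derD).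
Qed.

Lemma rees_monomial n a : Filt D n a -> rees D (a%:P * 'X^n).
Proof.
move=> Fa m; rewrite coefCM coefXn.
by case: eqP => [->|_]; rewrite ?mulr1 ?mulr0 //; apply: (Filt0 derD).
Qed.

Lemma reesC a : Filt D 0 a -> rees D a%:P.
Proof. by rewrite -[a%:P]mulr1; apply: rees_monomial. Qed.

Lemma rees_hcomp n p : rees D p -> rees D (hcomp n p).
Proof. by move=> Rp; apply: rees_monomial. Qed.

Lemma rees_plus_hcomp n p : (0 < n)%N -> rees D p -> rees_plus D (hcomp n p).
Proof. by case: n => // n _ Rp; split; [apply: rees_hcomp | rewrite coef_hcomp]. Qed.

Lemma rees_polyj c : rees D (polyj iota c).
Proof. by apply: reesC; apply: (Filt_kerD derD); apply: (kder_iota derD). Qed.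

Lemma rees1 : rees D 1.
Proof. by have := rees_polyj 1; rewrite /polyj rmorph1. Qed.

Lemma reesX : rees D 'X.
Proof.
have := @rees_monomial 1 1; rewrite polyC1 mul1r expr1; apply.
by apply: (Filt_kerD derD); apply: (kder1 derD).
Qed.

Lemma rees_subalg_closed : ksubalg_closed (polyj iota) (rees D).
Proof. by split; [exact: rees_polyj | exact: reesD | exact: reesM]. Qed.

Lemma fg_rees_of_monomials s :
  (forall y, y \in s -> rees D y) ->
  (forall n a, Filt D n a -> gen s (a%:P * 'X^n)) ->
  fg_subalg (polyj iota) (rees D).
Proof.
move=> sR gen_monomial; exists s; split=> // x; split=> [Rx | Sx].
  rewrite (poly_hcomp x); apply: (in_gen_subalg_sum (polyj0 iota)) => i.
  exact: gen_monomial.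
exact: Sx rees_subalg_closed sR.
Qed.

Lemma fg_rees_gr_fg : fg_subalg (polyj iota) (rees D) -> gr_fg iota D.
Proof.
case=> s [sR Rs]; exists s; split=> // p Rp; exists p; split; first exact/Rs.
by case=> [|n]; rewrite subrr coef0 //=; apply: (Filt0 derD).
Qed.

Lemma gr_fg_fg_rees : gr_fg iota D -> fg_subalg (polyj iota) (rees D).
Proof.
case=> s [sR gr_s]; set s' := 'X :: hcomps 0 s.
have gen_hcomp n x : gen s x -> gen s' (hcomp n x).
  move=> Sx; apply: in_gen_subalg_sub (in_gen_subalg_hcomp Sx n) => y sy.
  by rewrite inE sy orbT.
apply: (@fg_rees_of_monomials s') => [y|].
  rewrite inE => /predU1P[-> | /hcompsP[z [i [sz _ ->]]]]; first exact: reesX.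
  exact/rees_hcomp/sR.
elim=> [|n IHn] a Fa; have [q [Sq gr_pq]] := gr_s _ (rees_monomial Fa).
  have := gr_pq 0%N; rewrite /= coefB coefCM coefXn mulr1 => /eqP.
  by rewrite subr_eq0 => /eqP ->; apply: gen_hcomp.
have := gr_pq n.+1; rewrite /= coefB coefCM coefXn eqxx mulr1 => Fa'.
have -> : a%:P * 'X^(n.+1) = hcomp n.+1 q + 'X * ((a - q`_n.+1)%:P * 'X^n).
  by rewrite /hcomp polyCB exprS; ring.
apply: in_gen_subalgD; first exact: gen_hcomp.
by apply: in_gen_subalgM; [apply: mem_in_gen_subalg; rewrite mem_head | exact: IHn].
Qed.

Lemma fg_rees_fg_ker : fg_subalg (polyj iota) (rees D) -> fg_subalg iota (Filt D 0).
Proof.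
case=> s [sR Rs]; have tF : forall a, a \in map (coefp 0) s -> Filt D 0 a.
  by move=> _ /mapP[y sy ->]; apply: sR.
exists (map (coefp 0) s); split=> // a; split=> [Fa | Sa]; last first.
  exact: Sa (Filt0_subalg_closed derD) tF.
have := in_gen_subalg_rmorph (fun c => polyCK (iota c)) ((Rs _).1 (reesC Fa)).
by rewrite /= coefC.
Qed.

Lemma span_hcomps_sub_coef0 s x : (forall y, y \in s -> rees D y) -> gen s x ->
  rees D x /\ span_in (rees D) (hcomps 1 s) (x - (x`_0)%:P).
Proof.
move=> sR Sx; set gl := hcomps 1 s.
apply: (Sx (fun x => rees D x /\ span_in (rees D) gl (x - (x`_0)%:P))).
  split=> [c | p q [Rp Sp] [Rq Sq] | p q [Rp Sp] [Rq Sq]].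
  - split; first exact: rees_polyj.
    by rewrite /polyj coefC subrr; apply: span_in0; exact: rees0.
  - split; first exact: reesD.
    have -> : p + q - ((p + q)`_0)%:P = (p - (p`_0)%:P) + (q - (q`_0)%:P).
      by rewrite coefD polyCD; ring.
    exact: span_inD reesD _ _ _ Sp Sq.
  - split; first exact: reesM.
    have -> : p * q - ((p * q)`_0)%:P = q * (p - (p`_0)%:P) + (p`_0)%:P * (q - (q`_0)%:P).
      by rewrite coef0M polyCM; ring.
    by apply: (span_inD reesD); apply: (span_inM reesM) => //; apply: reesC.
move=> y sy; split; first exact: sR.
rewrite (poly_hcomp (y - _)); apply: (span_in_sum rees0 reesD) => -[[|i] _] /=.
  by rewrite /hcomp coefB coefC subrr mul0r; apply: span_in0; exact: rees0.
have -> : hcomp i.+1 (y - (y`_0)%:P) = hcomp i.+1 y by rewrite /hcomp coefB coefC subr0.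
have [gl_yi | ->] := hcomp_in_hcomps (m := 1) (i := i.+1) sy isT.
  by apply: mem_span_in gl_yi; [exact: rees0 | exact: rees1].
by apply: span_in0; exact: rees0.
Qed.

Lemma fg_rees_fg_rees_plus :
  fg_subalg (polyj iota) (rees D) -> fg_submodule (rees D) (rees_plus D).
Proof.
case=> s [sR Rs]; exists (size (hcomps 1 s)), (fun i => (hcomps 1 s)`_i).
split=> [i | x [Rx x0]].
  have /hcompsP[y [m [sy m_gt0 ->]]] := mem_nth 0 (ltn_ord i).
  exact: rees_plus_hcomp m_gt0 (sR y sy).
by have [_] := span_hcomps_sub_coef0 sR ((Rs x).1 Rx); rewrite x0 subr0.
Qed.

Lemma fg_ker_rees_plus_fg_rees :
    fg_subalg iota (Filt D 0) -> fg_submodule (rees D) (rees_plus D) ->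
  fg_subalg (polyj iota) (rees D).
Proof.
case=> t [tF Ft] [n [g [gM span_g]]].
set s' := map polyC t ++ hcomps 0 [seq g i | i <- enum 'I_n].
have gen_hcomp_g i m : gen s' (hcomp m (g i)).
  have [gs_gi | ->] := hcomp_in_hcomps (map_f g (mem_enum 'I_n i)) (leq0n m).
    by apply: mem_in_gen_subalg; rewrite mem_cat gs_gi orbT.
  exact: in_gen_subalg0 (polyj0 iota).
apply: (@fg_rees_of_monomials s') => [y|].
  rewrite mem_cat => /orP[/mapP[a ta ->] | /hcompsP[_ [i [/mapP[j _ ->] _ ->]]]].
    exact/reesC/tF.
  by apply: rees_hcomp; case: (gM j).
elim/ltn_ind=> -[|N] IH a Fa.
  have := in_gen_subalg_rmorph (f := polyC) (j' := polyj iota) (fun=> erefl) ((Ft a).1 Fa).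
  rewrite expr0 mulr1; apply: in_gen_subalg_sub => y ty.
  by rewrite mem_cat ty.
have Ma : rees_plus D (a%:P * 'X^(N.+1)).
  by split; [exact: rees_monomial | rewrite coefCM coefXn mulr0].
rewrite -hcomp_monomial; have [c [Rc ->]] := span_g _ Ma.
rewrite hcomp_sum; apply: (in_gen_subalg_sum (polyj0 iota)) => i.
rewrite hcompM; apply: (in_gen_subalg_sum (polyj0 iota)) => j.
have [lt_j_N1 | ge_j_N1] := ltnP j N.+1.
  by apply: in_gen_subalgM; [exact: IH _ lt_j_N1 _ (Rc i j) | exact: gen_hcomp_g].
have -> : nat_of_ord j = N.+1 by apply/eqP; rewrite eqn_leq ge_j_N1 -ltnS ltn_ord.
by rewrite subnn /hcomp (gM i).2 mul0r mulr0; apply: in_gen_subalg0 (polyj0 iota).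
Qed.

End ReesAlgebra.

Theorem lemma2p8 (k : closedFieldType) (A : idomainType)
    (iota : {rmorphism k -> A}) (D : A -> A) :
  [pchar k] =i pred0 ->
  finite_type iota ->
  normal_domain A ->
  is_kderivation iota D ->
  locally_nilpotent D ->
  [/\ (fg_subalg (polyj iota) (rees D) <-> gr_fg iota D),
      (gr_fg iota D <->
         (fg_subalg iota (Filt D 0) /\ fg_submodule (rees D) (rees_plus D))) &
      (fg_subalg (polyj iota) (rees D) <->
         (fg_subalg iota (Filt D 0) /\ fg_submodule (rees D) (rees_plus D)))].
Proof.
move=> _ _ _ derD _.
have fg_gr := fg_rees_gr_fg derD.
have gr_fg := gr_fg_fg_rees derD.
have fg_ker := fg_rees_fg_ker derD.
have fg_plus := fg_rees_fg_rees_plus derD.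
have ker_plus_fg := fg_ker_rees_plus_fg_rees derD.
by split; split; tauto.
Qed.
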